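(* Let $N=\{1,\dots,n\}$, let $\tilde Q\in\mathbb{R}^{n\times n}$ be symmetric positive definite, $\tilde d\in\mathbb{R}^n$, and $a,b\in\mathbb{R}^n$ with $b\le a$ componentwise. Let $A,B\subseteq N$ be disjoint, $I=N\setminus(A\cup B)$, and let $(x,s,t)$ be the KKT solution for $(A,B)$. Let $C=\{i: x_i<b_i \text{ or } s_i<0\}$, $D=\{i: x_i>a_i \text{ or } t_i>0\}$, and let $(y,u,v)$ be the KKT solution for $(C,D)$. Define $S=\{i\in A: s_i\ge0\}$, $T=\{i\in B: t_i\le 0\}$, $U=\{i\in I: x_i<b_i\}$, $V=\{i\in I: x_i>a_i\}$, $W=U\cup V$, $\overline W=N\setminus W$, $R=I\setminus W$, $K=\{i\in S\cup T\cup R: y_i<b_i\}$, $L=\{i\in S\cup T\cup R: y_i>a_i\}$ and $z=y-x$. Then for all real $c,d$, $$L_{c,d}(y,u,v)-L_{c,d}(x,s,t)=\tfrac12\big(z_W^{\top}\tilde Q_W z_W-z_{\overline W}^{\top}\tilde Q_{\overline W}z_{\overline W}\big)+\tfrac c2\sum_{i\in K}|y_i-b_i|^2+\tfrac d2\sum_{i\in L}|y_i-a_i|^2-\tfrac c2\sum_{i\in U}|x_i-b_i|^2-\tfrac d2\sum_{i\in V}|x_i-a_i|^2.$$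
   Context: For disjoint $A_1,A_2\subseteq N$, the KKT solution for $(A_1,A_2)$ is the unique triple $(x,s,t)\in(\mathbb{R}^n)^3$ with $x_{A_1}=b_{A_1}$, $x_{A_2}=a_{A_2}$, $s_i=0$ for $i\notin A_1$, $t_i=0$ for $i\notin A_2$, and $\tilde Qx+\tilde d+s+t=0$. The merit function is $L_{c,d}(x,s,t)=\tilde J(x)+\frac c2\|g(x)\|^2+\frac d2\|h(x)\|^2$ with $\tilde J(x)=\tfrac12x^{\top}\tilde Qx+\tilde d^{\top}x$, $g(x)=\max(b-x,0)$, $h(x)=\max(x-a,0)$ componentwise. For $M\subseteq N$, $z_M$ is the subvector of $z$ indexed by $M$ and $\tilde Q_M$ the principal submatrix of $\tilde Q$ indexed by $M$. *)

From HB Require Import structures.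
From mathcomp Require Import all_boot all_order all_algebra.
Set Implicit Arguments. Unset Strict Implicit. Unset Printing Implicit Defensive.
Import Order.TTheory GRing.Theory Num.Theory.
Local Open Scope ring_scope.

Section Defs.
Variables (R : realFieldType) (n : nat).

Definition sym_posdef (Q : 'M[R]_n) : Prop :=
  Q^T = Q /\ forall v : 'cV[R]_n, v != 0 -> 0 < (v^T *m Q *m v) 0 0.

(* (x,s,t) is the KKT solution for (A1,A2) (unique when Q is positive definite
   and A1, A2 are disjoint). *)
Definition KKT (Q : 'M[R]_n) (dt a b : 'cV[R]_n) (A1 A2 : {set 'I_n})
  (x s t : 'cV[R]_n) : Prop :=
  [/\ forall i, i \in A1 -> x i 0 = b i 0,
      forall i, i \in A2 -> x i 0 = a i 0,
      forall i, i \notin A1 -> s i 0 = 0,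
      forall i, i \notin A2 -> t i 0 = 0 &
      Q *m x + dt + s + t = 0].

Definition Jt (Q : 'M[R]_n) (dt x : 'cV[R]_n) : R :=
  2^-1 * (x^T *m Q *m x) 0 0 + (dt^T *m x) 0 0.

Definition gnorm2 (b x : 'cV[R]_n) : R :=
  \sum_i (Num.max (b i 0 - x i 0) 0) ^+ 2.

Definition hnorm2 (a x : 'cV[R]_n) : R :=
  \sum_i (Num.max (x i 0 - a i 0) 0) ^+ 2.

Definition merit (Q : 'M[R]_n) (dt a b : 'cV[R]_n) (c d : R)
  (x s t : 'cV[R]_n) : R :=
  Jt Q dt x + c / 2 * gnorm2 b x + d / 2 * hnorm2 a x.

Definition subquad (Q : 'M[R]_n) (M : {set 'I_n}) (z : 'cV[R]_n) : R :=
  \sum_(i in M) \sum_(j in M) z i 0 * Q i j * z j 0.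

End Defs.

(* With z = y - x, the two KKT systems give Q z = (s + t) - (u + v), where
   s + t vanishes on W and (u + v)_i z_i vanishes off W: an index outside W
   that is active for (C, D) already sat at that same bound for x.  Then
   J(x + z) - J(x) = -z^T (s + t) + z^T Q z / 2, and splitting z^T Q z into
   W- and (~: W)-blocks the cross terms cancel against z^T (s + t).  For the
   penalties, y_i < b_i makes i inactive for (C, D), hence in S :|: T :|: R, and
   x_i < b_i makes i inactive for (A, B), hence in I; likewise at the upper
   bounds. *)

From HB Require Import structures.
From mathcomp Require Import all_boot all_order all_algebra.
From mathcomp Require Import ring lra.
Set Implicit Arguments. Unset Strict Implicit. Unset Printing Implicit Defensive.
Import Order.TTheory GRing.Theory Num.Theory.
Local Open Scope ring_scope.

Lemma bigD_setC (R : nmodType) (n : nat) (M : {set 'I_n}) (F : 'I_n -> R) :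
  \sum_i F i = \sum_(i in M) F i + \sum_(i in ~: M) F i.
Proof.
rewrite (bigID (mem M)) /=; congr (_ + _).
by apply: eq_bigl => i; rewrite inE.
Qed.

Lemma dot_mxC (R : comPzRingType) (n : nat) (u v : 'cV[R]_n) :
  (u^T *m v) 0 0 = (v^T *m u) 0 0.
Proof. by rewrite -[u in RHS]trmxK -trmx_mul [RHS]mxE. Qed.

Section SymmetricQuadraticForm.
Variables (R : realFieldType) (n : nat) (Q : 'M[R]_n).
Hypothesis Qsym : Q^T = Q.

Lemma sym_mxC i j : Q i j = Q j i.
Proof. by rewrite -[in LHS]Qsym mxE. Qed.

Lemma quad_mxE (z : 'cV[R]_n) :
  (z^T *m Q *m z) 0 0 = \sum_i \sum_j z i 0 * Q i j * z j 0.
Proof.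
rewrite !mxE exchange_big /=; apply: eq_bigr => i _.
by rewrite mxE mulr_suml; apply: eq_bigr => j _; rewrite !mxE.
Qed.

Lemma Jt_addr (dt x z : 'cV[R]_n) :
  Jt Q dt (x + z) - Jt Q dt x =
    (z^T *m (Q *m x + dt)) 0 0 + 2^-1 * (z^T *m Q *m z) 0 0.
Proof.
have xQz : (x^T *m Q *m z) 0 0 = (z^T *m Q *m x) 0 0.
  by rewrite -mulmxA dot_mxC trmx_mul Qsym.
have addE (A B : 'M[R]_1) : (A + B) 0 0 = A 0 0 + B 0 0 by rewrite mxE.
rewrite /Jt [(x + z)^T]linearD /= !(mulmxDl, mulmxDr) !addE.
rewrite xQz (dot_mxC z dt) mulmxA; lra.
Qed.

(* Splitting [z] into its [M]- and [~: M]-blocks, the cross term of the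
   quadratic form cancels against the [~: M]-rows of [Q z]. *)
Lemma quad_split_subquad (M : {set 'I_n}) (z : 'cV[R]_n) :
  (z^T *m Q *m z) 0 0 - 2 * \sum_(i in ~: M) z i 0 * (Q *m z) i 0
  = subquad Q M z - subquad Q (~: M) z.
Proof.
pose blk (P1 P2 : {set 'I_n}) :=
  \sum_(i in P1) \sum_(j in P2) z i 0 * Q i j * z j 0.
have splitj (P : {set 'I_n}) :
    \sum_(i in P) \sum_j z i 0 * Q i j * z j 0 = blk P M + blk P (~: M).
  by rewrite /blk -big_split; apply: eq_bigr => i _; rewrite (bigD_setC M).
have rowE (P : {set 'I_n}) :
    \sum_(i in P) z i 0 * (Q *m z) i 0 = blk P M + blk P (~: M).
  rewrite -splitj; apply: eq_bigr => i _; rewrite mxE mulr_sumr.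
  by apply: eq_bigr => j _; rewrite mulrA.
have quadE : (z^T *m Q *m z) 0 0 = blk M M + blk M (~: M) + blk (~: M) M
                                   + blk (~: M) (~: M).
  by rewrite quad_mxE (bigD_setC M) !splitj addrA.
have crossC : blk M (~: M) = blk (~: M) M.
  rewrite /blk exchange_big /=; apply: eq_bigr => i _; apply: eq_bigr => j _.
  by rewrite sym_mxC; ring.
rewrite quadE rowE crossC /subquad -/(blk M M) -/(blk (~: M) (~: M)); ring.
Qed.

Lemma Jt_KKT_sub (dt x y w p : 'cV[R]_n) (M : {set 'I_n}) :
  Q *m x + dt + w = 0 -> Q *m y + dt + p = 0 ->
  (forall i, i \in M -> w i 0 = 0) ->
  (forall i, i \notin M -> p i 0 * (y - x) i 0 = 0) ->
  Jt Q dt y - Jt Q dt x =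
    2^-1 * (subquad Q M (y - x) - subquad Q (~: M) (y - x)).
Proof.
move=> /eqP; rewrite addr_eq0 => /eqP Ex.
move=> /eqP; rewrite addr_eq0 => /eqP Ey w0 p0.
set z := y - x.
have Qz : Q *m z = w - p.
  rewrite mulmxBr -(addrK dt (Q *m y)) -(addrK dt (Q *m x)) Ey Ex.
  by rewrite opprD opprK addrACA subrr addr0 addrC.
have wz : \sum_(i in ~: M) z i 0 * (Q *m z) i 0 = (z^T *m w) 0 0.
  rewrite [RHS]mxE (bigD_setC M) [X in X + _]big1 ?add0r => [|i /w0 wi0].
    apply: eq_bigr => i; rewrite inE => /p0 pz0; rewrite Qz !mxE in pz0 *.
    by rewrite mulrBr [_ * p i 0]mulrC pz0 subr0.
  by rewrite mxE wi0 mulr0.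
have -> : y = x + z by rewrite addrC subrK.
rewrite Jt_addr -quad_split_subquad wz Ex mulmxN mxE; lra.
Qed.

End SymmetricQuadraticForm.

Lemma gnorm2_support (R : realFieldType) (n : nat) (b x : 'cV[R]_n)
    (P : {set 'I_n}) :
  (forall i, x i 0 < b i 0 -> i \in P) ->
  gnorm2 b x = \sum_(i in [set i in P | x i 0 < b i 0]) `|x i 0 - b i 0| ^+ 2.
Proof.
move=> lt_mem; rewrite /gnorm2 [RHS]big_mkcond; apply: eq_bigr => i _.
rewrite inE; case: (ltP (x i 0) (b i 0)) => [xb | bx].
  rewrite lt_mem //= max_l; last by rewrite subr_ge0 ltW.
  by rewrite distrC real_normK ?num_real.
by rewrite andbF max_r ?expr0n // subr_le0.
Qed.

Lemma hnorm2_support (R : realFieldType) (n : nat) (a x : 'cV[R]_n)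
    (P : {set 'I_n}) :
  (forall i, x i 0 > a i 0 -> i \in P) ->
  hnorm2 a x = \sum_(i in [set i in P | x i 0 > a i 0]) `|x i 0 - a i 0| ^+ 2.
Proof.
move=> gt_mem; rewrite /hnorm2 [RHS]big_mkcond; apply: eq_bigr => i _.
rewrite inE; case: (ltP (a i 0) (x i 0)) => [ax | xa].
  rewrite gt_mem //= max_l; last by rewrite subr_ge0 ltW.
  by rewrite real_normK ?num_real.
by rewrite andbF max_r ?expr0n // subr_le0.
Qed.

Section KKTBounds.
Variables (R : realFieldType) (n : nat) (Q : 'M[R]_n) (dt a b : 'cV[R]_n).
Variables (A1 A2 : {set 'I_n}) (x s t : 'cV[R]_n).
Hypothesis ba : forall i, b i 0 <= a i 0.
Hypothesis kkt : KKT Q dt a b A1 A2 x s t.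

Lemma KKT_free_of_lt_lb (i : 'I_n) : x i 0 < b i 0 -> i \in ~: (A1 :|: A2).
Proof.
case: kkt => xA1 xA2 _ _ _ xb; rewrite !inE negb_or.
apply/andP; split; apply/negP.
  by move/xA1 => xE; move: xb; rewrite xE ltxx.
by move/xA2 => xE; move: xb; rewrite xE ltNge ba.
Qed.

Lemma KKT_free_of_gt_ub (i : 'I_n) : x i 0 > a i 0 -> i \in ~: (A1 :|: A2).
Proof.
case: kkt => xA1 xA2 _ _ _ ax; rewrite !inE negb_or.
apply/andP; split; apply/negP.
  by move/xA1 => xE; move: ax; rewrite xE ltNge ba.
by move/xA2 => xE; move: ax; rewrite xE ltxx.
Qed.

End KKTBounds.

Section ActiveSets.
Variables (R : realFieldType) (n : nat) (Q : 'M[R]_n) (dt a b : 'cV[R]_n).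
Variables (A B : {set 'I_n}) (x s t y u v : 'cV[R]_n).
Hypothesis ba : forall i, b i 0 <= a i 0.
Hypothesis kx : KKT Q dt a b A B x s t.

Local Notation I := (~: (A :|: B)).
Local Notation C := [set i | (x i 0 < b i 0) || (s i 0 < 0)].
Local Notation D := [set i | (x i 0 > a i 0) || (t i 0 > 0)].
Local Notation S := [set i in A | s i 0 >= 0].
Local Notation T := [set i in B | t i 0 <= 0].
Local Notation U := [set i in I | x i 0 < b i 0].
Local Notation V := [set i in I | x i 0 > a i 0].
Local Notation W := (U :|: V).
Local Notation Rs := (I :\: W).

Hypothesis ky : KKT Q dt a b C D y u v.

Lemma notin_CD_mem_STR (i : 'I_n) :
  i \notin C -> i \notin D -> i \in S :|: T :|: Rs.
Proof.
rewrite !inE !negb_or -!leNgt => /andP[bx s0] /andP[xa t0].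
case: (boolP (i \in A)) => iA /=; first by rewrite s0.
case: (boolP (i \in B)) => iB /=; first by rewrite t0.
by rewrite -!leNgt bx xa.
Qed.

Lemma mem_STR_of_lt_lb (i : 'I_n) : y i 0 < b i 0 -> i \in S :|: T :|: Rs.
Proof.
move/(KKT_free_of_lt_lb ba ky); rewrite in_setC in_setU negb_or => /andP[].
exact: notin_CD_mem_STR.
Qed.

Lemma mem_STR_of_gt_ub (i : 'I_n) : y i 0 > a i 0 -> i \in S :|: T :|: Rs.
Proof.
move/(KKT_free_of_gt_ub ba ky); rewrite in_setC in_setU negb_or => /andP[].
exact: notin_CD_mem_STR.
Qed.

Lemma multipliers_W0 (i : 'I_n) : i \in W -> (s + t) i 0 = 0.
Proof.
case: kx => _ _ sA tB _ /setUP[] /setIdP[+ _]; rewrite !inE negb_or;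
  by case/andP => iA iB; rewrite mxE sA ?tB ?addr0.
Qed.

Lemma mem_C_notin_W_lb (i : 'I_n) : i \in C -> i \notin W -> x i 0 = b i 0.
Proof.
case: kx => xA _ sA _ _; rewrite inE => /orP[xb | s_neg] iW.
  case/negP: iW; apply/setUP; left; apply/setIdP.
  by split=> //; exact (KKT_free_of_lt_lb ba kx xb).
apply: xA; apply: contraLR s_neg => /sA ->; by rewrite ltxx.
Qed.

Lemma mem_D_notin_W_ub (i : 'I_n) : i \in D -> i \notin W -> x i 0 = a i 0.
Proof.
case: kx => _ xB _ tB _; rewrite inE => /orP[ax | t_pos] iW.
  case/negP: iW; apply/setUP; right; apply/setIdP.
  by split=> //; exact (KKT_free_of_gt_ub ba kx ax).
apply: xB; apply: contraLR t_pos => /tB ->; by rewrite ltxx.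
Qed.

Lemma comp_slack_Wbar (i : 'I_n) :
  i \notin W -> (u + v) i 0 * (y - x) i 0 = 0.
Proof.
case: ky => yC yD uC vD _ iW; rewrite !mxE.
case: (boolP (i \in C)) => iC.
  by rewrite yC // mem_C_notin_W_lb // subrr mulr0.
case: (boolP (i \in D)) => iD.
  by rewrite yD // mem_D_notin_W_ub // subrr mulr0.
by rewrite uC // vD // addr0 mul0r.
Qed.

End ActiveSets.

Theorem mainTheorem3 (R : realFieldType) (n : nat)
  (Q : 'M[R]_n) (dt a b : 'cV[R]_n)
  (A B : {set 'I_n}) (x s t y u v : 'cV[R]_n) :
  sym_posdef Q ->
  (forall i, b i 0 <= a i 0) ->
  [disjoint A & B] ->
  KKT Q dt a b A B x s t ->
  let I := ~: (A :|: B) in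
  let C := [set i | (x i 0 < b i 0) || (s i 0 < 0)] in
  let D := [set i | (x i 0 > a i 0) || (t i 0 > 0)] in
  KKT Q dt a b C D y u v ->
  let S := [set i in A | s i 0 >= 0] in
  let T := [set i in B | t i 0 <= 0] in
  let U := [set i in I | x i 0 < b i 0] in
  let V := [set i in I | x i 0 > a i 0] in
  let W := U :|: V in
  let Wbar := ~: W in
  let Rs := I :\: W in
  let K := [set i in S :|: T :|: Rs | y i 0 < b i 0] in
  let L := [set i in S :|: T :|: Rs | y i 0 > a i 0] in
  let z := y - x in
  forall c d : R,
    merit Q dt a b c d y u v - merit Q dt a b c d x s t =
      2^-1 * (subquad Q W z - subquad Q Wbar z)
      + c / 2 * \sum_(i in K) `|y i 0 - b i 0| ^+ 2
      + d / 2 * \sum_(i in L) `|y i 0 - a i 0| ^+ 2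
      - c / 2 * \sum_(i in U) `|x i 0 - b i 0| ^+ 2
      - d / 2 * \sum_(i in V) `|x i 0 - a i 0| ^+ 2.
Proof.
move=> [Qsym _] ba _ kx I C D ky S T U V W Wbar Rs K L z c d.
have kx' : Q *m x + dt + (s + t) = 0 by case: kx => _ _ _ _; rewrite addrA.
have ky' : Q *m y + dt + (u + v) = 0 by case: ky => _ _ _ _; rewrite addrA.
have JE : Jt Q dt y - Jt Q dt x = 2^-1 * (subquad Q W z - subquad Q Wbar z).
  exact: (Jt_KKT_sub Qsym kx' ky' (multipliers_W0 kx)
                     (comp_slack_Wbar ba kx ky)).
rewrite /merit (gnorm2_support (mem_STR_of_lt_lb A B ba ky))
  (hnorm2_support (mem_STR_of_gt_ub A B ba ky))
  (gnorm2_support (KKT_free_of_lt_lb ba kx))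
  (hnorm2_support (KKT_free_of_gt_ub ba kx)) -JE.
ring.
Qed.
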